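(* Let $E/\mathbb{Q}$ be an elliptic curve without complex multiplication that has abelian entanglements, let $m$ be a positive integer with prime factorisation $m=\prod_{\ell}\ell^{\alpha_\ell}$, and for each prime $\ell\mid m$ let $S(\ell)$ be a nonempty subset of $G(\ell^{\alpha_\ell})$. Put $\mathcal{S}_m=\prod_{\ell\mid m}S(\ell)$ and $\mathcal{G}_m=\prod_{\ell\mid m}G(\ell^{\alpha_\ell})$. For each character $\tilde\chi$ of the finite abelian group $\Phi_m=\mathcal{G}_m/G(m)$ let $\chi=\tilde\chi\circ\psi_m$, where $\psi_m:\mathcal{G}_m\to\Phi_m$ is the quotient map, let $\chi_\ell$ be the restriction of $\chi$ to the factor $G(\ell^{\alpha_\ell})$, and set $E_{\chi,\ell}=\frac{1}{|S(\ell)|}\sum_{x\in S(\ell)}\chi_\ell(x)$. Then $$\frac{|\mathcal{S}_m\cap G(m)|}{|G(m)|}=\Big(1+\sum_{\tilde\chi\in\widehat{\Phi}_m\setminus\{1\}}\prod_{\ell\mid m}E_{\chi,\ell}\Big)\frac{|\mathcal{S}_m|}{|\mathcal{G}_m|}.$$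
   Context: $G(n)\leqslant\mathrm{GL}_2(\mathbb{Z}/n\mathbb{Z})$ denotes the image of the mod-$n$ Galois representation of $E$, and $G(m)$ is viewed via the Chinese remainder theorem as a subgroup of $\mathcal{G}_m$; since $E$ has abelian entanglements, $G(m)$ is normal in $\mathcal{G}_m$ with abelian quotient. $\widehat{\Phi}_m$ is the group of homomorphisms $\Phi_m\to\mathbb{C}^\times$. Definitions: let $G\leqslant\mathrm{GL}_2(\widehat{\mathbb{Z}})$ be the adelic image of $E$ and $G_{n^\infty}$ its image in $\prod_{\ell\mid n}\mathrm{GL}_2(\mathbb{Z}_\ell)$; $n$ is stable if $G_{n^\infty}$ is the full preimage of $G(n)$ under reduction, split if $G=G_{n^\infty}\times\prod_{\ell\nmid n}\mathrm{GL}_2(\mathbb{Z}_\ell)$; $m_E$ is the smallest split and stable positive integer. A subgroup $H\leqslant H_1\times\dots\times H_k$ surjecting onto each factor has abelian entanglements if for every partition $\{A,B\}$ of $\{1,\dots,k\}$ into nonempty sets the Goursat quotient $H_A/\{x\in H_A:(x,1)\in H\}$ is abelian ($H_A$ = image of $H$ in $\prod_{i\in A}H_i$). $E$ has abelian entanglements if $G(m_E)\leqslant\prod_{\ell^\alpha\|m_E}G(\ell^\alpha)$ has abelian entanglements. *)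

From mathcomp Require Import all_boot all_order all_algebra all_fingroup all_solvable all_field all_character.
Set Implicit Arguments. Unset Strict Implicit. Unset Printing Implicit Defensive.
Import GRing.Theory Num.Theory.

(* Abstract group-theoretic setting:
   - gT ambient finite group type, I a finite index type (the primes l | m),
   - Gl l : {group gT} plays G(l^{alpha_l}); the full group
     calG = \big[dprod/1]_l Gl l is the (internal) direct product,
   - H : {group gT} plays G(m) <= calG,
   - a character chi~ of Phi = calG / H is a linear irreducible character
     'chi_i of the quotient group, and chi = chi~ o psi is x |-> 'chi_i (coset H x). *)

Local Open Scope ring_scope.

Definition Echi (gT : finGroupType) (G H : {group gT}) (i : Iirr (G / H))
    (S : {set gT}) : algC :=
  (#|S|%:R)^-1 * \sum_(x in S) 'chi_i (coset H x).

From mathcomp Require Import all_boot all_order all_algebra all_fingroup all_solvable all_field all_character.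
From mathcomp Require Import ring.
Set Implicit Arguments. Unset Strict Implicit. Unset Printing Implicit Defensive.
Import GRing.Theory Num.Theory.
Local Open Scope ring_scope.

(* Since G / H is abelian, its irreducible characters are all linear and their
   sum is the regular character, equal to |G / H| at 1 and 0 elsewhere; hence
   |S :&: H| = |G / H|^-1 sum_chi sum_(x in S) chi(xH).  Each chi o coset H is
   a homomorphism on G and S is the product set of the S(l) in the direct
   product G, so the inner sum factors as |S| prod_l E_(chi, l).  The trivial
   character contributes the leading 1, and |G| = |H| |G / H|. *)

Section ProdsetInDirectProduct.

Variables (gT : finGroupType) (I : finType) (Gl : I -> {group gT}) (G : {group gT}).
Hypothesis defG : (\big[dprod/1]_l Gl l)%g = G.

Lemma bigdprod_prod_inj (c1 c2 : {ffun I -> gT}) :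
    (forall l, c1 l \in Gl l) -> (forall l, c2 l \in Gl l) ->
  (\prod_l c1 l)%g = (\prod_l c2 l)%g -> c1 = c2.
Proof.
move=> Gc1 Gc2 eq_c12.
have Gx : (\prod_l c1 l)%g \in G by rewrite -(bigdprodW defG); apply: mem_prodg.
have [c [_ _ uniq_c]] := mem_bigdprod defG Gx.
by apply/ffunP => l; rewrite (uniq_c c1) ?(uniq_c c2).
Qed.

Lemma bigdprod_factor_sub l : Gl l \subset G.
Proof. by rewrite -(bigdprodWY defG) sub_gen // (bigcup_sup l). Qed.

Variable Sl : I -> {set gT}.
Hypothesis sSG : forall l, Sl l \subset Gl l.

Lemma prodset_family :
  (\prod_l Sl l)%g = [set (\prod_l c l)%g | c : {ffun I -> gT} in family Sl].
Proof.
apply/setP => x; apply/prodsgP/imsetP => [[c Sc ->] | [c]].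
  exists (finfun c); first by apply/familyP => l; rewrite ffunE Sc.
  by apply: eq_bigr => l _; rewrite ffunE.
by move=> /familyP Sc ->; exists c => // l _; apply: Sc.
Qed.

Lemma mem_family_factor c l : c \in family Sl -> c l \in Gl l.
Proof. by move=> /familyP Sc; apply: subsetP (sSG l) _ (Sc l). Qed.

Lemma prodset_sub_bigdprod : (\prod_l Sl l)%g \subset G.
Proof.
rewrite -(bigdprodW defG); apply/subsetP => x /prodsgP[c Sc ->].
by apply: mem_prodg => l _; apply: subsetP (sSG l) _ (Sc l isT).
Qed.

Lemma big_prodset_morph (R : pzSemiRingType) (f : gT -> R) :
    f 1%g = 1 -> {in G &, {morph f : x y / (x * y)%g >-> x * y}} ->
  \sum_(x in (\prod_l Sl l)%g) f x = \prod_l \sum_(x in Sl l) f x.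
Proof.
move=> f1 fM; rewrite bigA_distr_big_dep prodset_family big_imset; last first.
  by move=> c1 c2 Sc1 Sc2; apply: bigdprod_prod_inj => l; apply: mem_family_factor.
apply: eq_bigr => c Sc.
rewrite (big_morph_in (mem G) f (@groupM _ G) (group1 G) fM f1) // => l _.
by apply: subsetP (bigdprod_factor_sub l) _ (mem_family_factor l Sc).
Qed.

Lemma card_prodset_bigdprod : #|(\prod_l Sl l)%g| = (\prod_l #|Sl l|)%N.
Proof.
rewrite -sum1_card (big_prodset_morph (f := fun=> 1%N)) //.
by apply: eq_bigr => l _; rewrite sum1_card.
Qed.

End ProdsetInDirectProduct.

Lemma sum_irr_abelian (rT : finGroupType) (K : {group rT}) (y : rT) :
  abelian K -> \sum_i 'chi[K]_i y = #|K|%:R *+ (y == 1%g).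
Proof.
move=> /char_abelianP linK; rewrite -cfRegE cfReg_sum sum_cfunE.
by apply: eq_bigr => i _; rewrite cfunE lin_char1 ?mul1r.
Qed.

Section CharactersOfAbelianQuotient.

Variables (gT : finGroupType) (G H : {group gT}).
Hypotheses (nsHG : (H <| G)%g) (abGH : abelian (G / H)%g).

Let nHG : G \subset 'N(H)%g := normal_norm nsHG.

Lemma card_setI_sum_irr_coset (A : {set gT}) : A \subset G ->
  #|A :&: H|%:R =
    #|(G / H)%g|%:R^-1 * \sum_(i : Iirr (G / H)) \sum_(x in A) 'chi_i (coset H x).
Proof.
move=> sAG; rewrite exchange_big big_distrr /= -sum1_card big_mkcond natr_sum.
rewrite [RHS]big_mkcond /=; apply: eq_bigr => x _; rewrite inE.
case: (boolP (x \in A)) => [Ax | _] //=.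
have Nx : x \in 'N(H)%g := subsetP nHG x (subsetP sAG x Ax).
rewrite sum_irr_abelian //.
have [Hx | notHx] := boolP (x \in H).
  by rewrite coset_id // eqxx mulVf ?neq0CG.
by rewrite (contraNF (fun e => coset_idr Nx (eqP e)) notHx) mulr0n mulr0.
Qed.

Lemma lin_char_coset_morph (xi : 'CF(G / H)) : xi \is a linear_char ->
  {in G &, {morph (fun x => xi (coset H x)) : x y / (x * y)%g >-> x * y}}.
Proof.
move=> linxi x y Gx Gy /=.
by rewrite morphM ?(subsetP nHG) // (lin_charM linxi) ?mem_quotient.
Qed.

End CharactersOfAbelianQuotient.

Lemma Echi_irr0 (gT : finGroupType) (G H : {group gT}) (S : {set gT}) :
  S \subset G -> S != set0 ->
  Echi (0 : Iirr (G / H)) S = 1.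
Proof.
move=> sSG S0; rewrite /Echi (eq_bigr (fun=> 1)) => [|x Sx].
  by rewrite sumr_const mulVf // pnatr_eq0 -lt0n card_gt0.
by rewrite irr0 cfun1E mem_quotient ?(subsetP sSG).
Qed.

Lemma sum_prodset_Echi (gT : finGroupType) (I : finType) (Gl : I -> {group gT})
    (G H : {group gT}) (Sl : I -> {set gT}) (i : Iirr (G / H)) :
    (\big[dprod/1]_l Gl l)%g = G -> (H <| G)%g -> 'chi_i \is a linear_char ->
    (forall l, Sl l \subset Gl l) -> (forall l, Sl l != set0) ->
  \sum_(x in (\prod_l Sl l)%g) 'chi_i (coset H x) =
    #|(\prod_l Sl l)%g|%:R * \prod_l Echi i (Sl l).
Proof.
move=> defG nsHG lin_i sSG S0.
rewrite (big_prodset_morph defG sSG _ (lin_char_coset_morph nsHG lin_i)); last first.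
  by rewrite morph1 lin_char1.
rewrite (card_prodset_bigdprod defG sSG) natr_prod -big_split /=.
by apply: eq_bigr => l _; rewrite /Echi mulVKf // pnatr_eq0 -lt0n card_gt0.
Qed.

Local Close Scope ring_scope.

Theorem theorem3p4 (gT : finGroupType) (I : finType)
    (Gl : I -> {group gT}) (G H : {group gT}) (Sl : I -> {set gT}) :
  (\big[dprod/1]_(l : I) Gl l)%g = G ->
  H \subset G ->
  (forall l : I, Gl l \subset H * (\prod_(j : I | j != l) Gl j))%g ->
  (H <| G)%g ->
  abelian (G / H)%g ->
  (forall l : I, Sl l \subset Gl l) ->
  (forall l : I, Sl l != set0) ->
  let calS := (\prod_(l : I) Sl l)%g in
  ((#|calS :&: H|%:R / #|H|%:R : algC) =
   (1 + \sum_(i : Iirr (G / H)%G | (i != 0) && ('chi_i \is a linear_char))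
          \prod_(l : I) Echi i (Sl l)) * (#|calS|%:R / #|G|%:R))%R.
Proof.
(* The identity does not need H to surject onto the factors [Gl l]. *)
move=> defG sHG _ nsHG abGH sSG S0 calS.
have lin_i := char_abelianP _ abGH.
have sSG' : calS \subset G := prodset_sub_bigdprod defG sSG.
rewrite (card_setI_sum_irr_coset nsHG abGH sSG').
under eq_bigr do rewrite (sum_prodset_Echi defG nsHG (lin_i _) sSG S0).
have sSlG l : Sl l \subset G := subset_trans (sSG l) (bigdprod_factor_sub defG l).
have E0 : (\prod_l Echi (0 : Iirr (G / H)%G) (Sl l) = 1)%R.
  by apply: big1 => l _; apply: Echi_irr0.
rewrite -big_distrr /= (bigD1 0%R) //= E0.
under [in RHS]eq_bigl do rewrite lin_i andbT.
rewrite -(Lagrange sHG) -(card_quotient (normal_norm nsHG)) natrM.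
by field; rewrite (neq0CG H) (neq0CG (G / H)%G).
Qed.
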